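(* Let $p\in(0,1)$ and $u\in(0,1)$ with $u\ne p$. Let $S_0(x)=u+(1-u)x$, $S_1(x)=ux$, and let $\mu_u$ be the unique probability measure on $[0,1]$ satisfying $\mu_u=(1-p)\mu_u\circ S_0^{-1}+p\,\mu_u\circ S_1^{-1}$ (equivalently, the law of $\Theta_\infty(u)=\sum_{k\ge0}u^{T_k}((1-u)/u)^k$, where $T_k=G_0+\dots+G_k$ with $G_i$ IID, $P(G_0=n)=p^{n-1}(1-p)$, $n\ge1$). Then $\mu_u$ is singular with respect to Lebesgue measure. *)

From HB Require Import structures.
From mathcomp Require Import all_boot all_order all_algebra.
From mathcomp Require Import all_classical all_reals all_analysis.
Set Implicit Arguments. Unset Strict Implicit. Unset Printing Implicit Defensive.
Import Order.TTheory GRing.Theory Num.Theory.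
Local Open Scope classical_set_scope.
Local Open Scope ring_scope.

Definition S0 {R : realType} (u : R) : R -> R := fun x => u + (1 - u) * x.
Definition S1 {R : realType} (u : R) : R -> R := fun x => u * x.

Definition self_similar_measure {R : realType} (p u : R)
  (mu : probability R R) : Prop :=
  mu [set x : R | 0 <= x <= 1] = 1%E /\
  forall A : set R, measurable A ->
    mu A = ((1 - p)%:E * mu (S0 u @^-1` A) + p%:E * mu (S1 u @^-1` A))%E.

Definition singular_wrt_lebesgue {R : realType} (mu : probability R R) : Prop :=
  exists N : set R, [/\ measurable N, (@lebesgue_measure R) N = 0%E
                       & mu (~` N) = 0%E].

From HB Require Import structures.
From mathcomp Require Import all_boot all_order all_algebra.
From mathcomp Require Import all_classical all_reals all_analysis.
From mathcomp Require Import measurable_realfun ring lra.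
Import Order.TTheory GRing.Theory Num.Theory.
Local Open Scope classical_set_scope.
Local Open Scope ring_scope.

(* Read the address of x in [0,1) by iterating the expanding map inverse to
   S_0 and S_1, and let K_n(x) count the letters S_1 among its first n
   letters.  The self-similarity equation with weight p forces K_n to be
   Binomial(n, p) under mu; Lebesgue measure on [0,1) satisfies the same
   equation with weight u, so under it K_n is Binomial(n, u).  On the set B_n
   where the Binomial(n, u) weight of K_n is smaller than the Binomial(n, p)
   one, Lebesgue measure is at most rho^n, and so is the mu-measure of the
   complement, where rho = sqrt(pu) + sqrt((1-p)(1-u)) is the Hellinger
   affinity of the two laws; rho < 1 since p <> u.  By Borel-Cantelli,
   limsup B_n is Lebesgue-null and carries mu. *)

Section hellinger_affinity.
Context {R : realType}.
Implicit Types p u : R.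

Definition hellinger_affinity p u : R :=
  Num.sqrt (p * u) + Num.sqrt ((1 - p) * (1 - u)).

Lemma hellinger_affinityC p u : hellinger_affinity p u = hellinger_affinity u p.
Proof. by rewrite /hellinger_affinity mulrC [(1 - p) * _]mulrC. Qed.

Lemma hellinger_affinity_ge0 p u : 0 <= hellinger_affinity p u.
Proof. by rewrite addr_ge0 ?sqrtr_ge0. Qed.

Lemma hellinger_affinity_lt1 p u : 0 <= p <= 1 -> 0 <= u <= 1 -> p != u ->
  hellinger_affinity p u < 1.
Proof.
move=> /andP[p0 p1] /andP[u0 u1] pu.
have sq (x : R) : 0 <= x -> Num.sqrt x ^+ 2 = x by move=> x0; rewrite sqr_sqrtr.
have p1' : 0 <= 1 - p by rewrite subr_ge0.
have u1' : 0 <= 1 - u by rewrite subr_ge0.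
have -> : hellinger_affinity p u = 1 - ((Num.sqrt p - Num.sqrt u) ^+ 2
    + (Num.sqrt (1 - p) - Num.sqrt (1 - u)) ^+ 2) / 2.
  by rewrite /hellinger_affinity !sqrtrM // !sqrrB !sq //; field.
rewrite ltrBlDr ltrDl divr_gt0 // ltr_pwDl ?sqr_ge0 // lt_def sqr_ge0 andbT.
by rewrite sqrf_eq0 subr_eq0 eqr_sqrt.
Qed.

Lemma sum_sqrt_binomial_pmf p u n : 0 <= p <= 1 -> 0 <= u <= 1 ->
  \sum_(k < n.+1) Num.sqrt (binomial_pmf n p k * binomial_pmf n u k)
  = hellinger_affinity p u ^+ n.
Proof.
move=> /andP[p0 p1] /andP[u0 u1].
rewrite /hellinger_affinity; set s := Num.sqrt _; set t := Num.sqrt _.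
have s2 : s ^+ 2 = p * u by rewrite sqr_sqrtr ?mulr_ge0.
have t2 : t ^+ 2 = (1 - p) * (1 - u) by rewrite sqr_sqrtr ?mulr_ge0 ?subr_ge0.
rewrite addrC exprDn; apply: eq_bigr => k _.
have -> : binomial_pmf n p k * binomial_pmf n u k
    = (t ^+ (n - k) * s ^+ k *+ 'C(n, k)) ^+ 2.
  rewrite -mulr_natr !exprMn -!exprM mulnC [(k * 2)%N]mulnC !exprM s2 t2.
  by rewrite /binomial_pmf /unstable.onem !exprMn; ring.
by rewrite sqrtr_sqr ger0_norm // mulrn_wge0 // mulr_ge0 // exprn_ge0 // sqrtr_ge0.
Qed.

Lemma sum_binomial_pmf_le_affinity p u n (P : pred nat) :
  0 <= p <= 1 -> 0 <= u <= 1 ->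
  (forall k, P k -> binomial_pmf n p k <= binomial_pmf n u k) ->
  \sum_(k < n.+1 | P k) binomial_pmf n p k <= hellinger_affinity p u ^+ n.
Proof.
move=> p01 u01 Ple; rewrite -sum_sqrt_binomial_pmf // big_mkcond /=.
apply: ler_sum => k _; case: ifPn => [Pk|_]; last exact: sqrtr_ge0.
have pk0 := binomial_pmf_ge0 n k p01.
rewrite {1}(_ : binomial_pmf n p k = Num.sqrt (binomial_pmf n p k ^+ 2)).
  by rewrite ler_sqrt ?mulr_ge0 ?binomial_pmf_ge0 // expr2 ler_wpM2l // Ple.
by rewrite sqrtr_sqr ger0_norm.
Qed.

End hellinger_affinity.

Section binomial_pmf_recursion.
Context {R : realType}.
Variables (q : R) (n : nat).

Lemma binomial_pmfS0 : binomial_pmf n.+1 q 0 = (1 - q) * binomial_pmf n q 0.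
Proof. by rewrite /binomial_pmf /unstable.onem !bin0 !subn0 exprS; ring. Qed.

Lemma binomial_pmfSS k : binomial_pmf n.+1 q k.+1
  = (1 - q) * binomial_pmf n q k.+1 + q * binomial_pmf n q k.
Proof.
rewrite /binomial_pmf /unstable.onem binS mulrnDr subSS.
have [kn|nk] := ltnP k n.
  by rewrite -(subnSK kn) !exprS; ring.
rewrite [in RHS]bin_small ?ltnS // (bin_small (_ : n < k.+1)%N) ?ltnS //.
by rewrite (eqP (_ : n - k == 0)%N) ?subn_eq0 // exprS; ring.
Qed.

Lemma binomial_pmf_small : binomial_pmf n q n.+1 = 0.
Proof. by rewrite /binomial_pmf bin_small. Qed.

Lemma sum_binomial_pmfS (P : pred nat) :
  \sum_(k < n.+2 | P k) binomial_pmf n.+1 q k =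
  (1 - q) * \sum_(k < n.+1 | P k) binomial_pmf n q k
  + q * \sum_(k < n.+1 | P k.+1) binomial_pmf n q k.
Proof.
have -> : \sum_(k < n.+1 | P k) binomial_pmf n q k
        = \sum_(k < n.+2 | P k) binomial_pmf n q k.
  by rewrite [RHS]big_mkcond big_ord_recr /= binomial_pmf_small if_same addr0 -big_mkcond.
rewrite big_mkcond [X in (1 - q) * X]big_mkcond [X in q * X]big_mkcond /=.
rewrite big_ord_recl [X in (1 - q) * X]big_ord_recl /=.
rewrite binomial_pmfS0 mulrDr -addrA; congr (_ + _); first by case: (P 0%N); rewrite ?mulr0.
rewrite !mulr_sumr -big_split /=; apply: eq_bigr => i _.
by case: (P _); rewrite ?mulr0 ?addr0 // binomial_pmfSS.
Qed.

End binomial_pmf_recursion.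

Lemma nneseries_lty_geometric {R : realType} (r : R) (a : (\bar R)^nat) :
  0 <= r < 1 -> (forall n, (0 <= a n <= (r ^+ n)%:E)%E) ->
  (\sum_(n <oo) a n < +oo)%E.
Proof.
move=> /andP[r0 r1] a_ge0.
apply: (@le_lt_trans _ _ ((1 - r)^-1)%:E); last exact: ltry.
apply: (@le_trans _ _ (\sum_(n <oo) (r ^+ n)%:E)%E).
  by apply: lee_nneseries => n _; have /andP[] := a_ge0 n.
apply: lime_le.
  by apply: is_cvg_nneseries => n _ _; rewrite lee_fin exprn_ge0.
apply: nearW => N; rewrite sumEFin lee_fin.
have -> : \sum_(0 <= k < N) r ^+ k = (1 - r ^+ N) / (1 - r).
  have := congr1 (fun f => f N) (geometric_seriesE 1 (negbT (lt_eqF r1))).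
  by rewrite seriesEnat /= mul1r; under eq_bigr do rewrite mul1r.
by rewrite -[leRHS]mul1r ler_pM2r ?invr_gt0 ?subr_gt0 // gerBl exprn_ge0.
Qed.

Lemma measurable_lim_sup_set d (T : measurableType d) (F : (set T)^nat) :
  (forall n, measurable (F n)) -> measurable (lim_sup_set F).
Proof. by move=> mF; apply: bigcapT_measurable => n; exact: bigcup_measurable. Qed.

Lemma setC_lim_sup_set T (F : (set T)^nat) :
  ~` lim_sup_set F `<=` lim_sup_set (fun n => ~` F n).
Proof.
move=> x /= /existsNP[n0 notF] n _.
exists (maxn n n0); first by rewrite /= leq_maxl.
by move=> Fx; apply: notF; exists (maxn n n0) => //=; rewrite leq_maxr.
Qed.

Lemma lim_sup_set_conull d (T : measurableType d) {R : realType}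
    (mu : {measure set T -> \bar R}) (F : (set T)^nat) :
  (forall n, measurable (F n)) -> (\sum_(n <oo) mu (~` F n) < +oo)%E ->
  mu (~` lim_sup_set F) = 0%E.
Proof.
move=> mF muCF; have mCF n : measurable (~` F n) by exact: measurableC.
apply: (subset_measure0 _ _ (@setC_lim_sup_set _ F)).
- exact/measurableC/measurable_lim_sup_set.
- exact: measurable_lim_sup_set.
- exact: lim_sup_set_cvg0.
Qed.

Section conull.
Context {d} {T : measurableType d} {R : realType}.
Context {m : {measure set T -> \bar R}} {D : set T}.
Hypotheses (mD : measurable D) (mCD : m (~` D) = 0%E).

Lemma measure_setI_conull A : measurable A -> m (A `&` D) = m A.
Proof.
move=> mA; rewrite [RHS](measureDI m mA mD).
rewrite (@subset_measure0 _ _ _ m (A `\` D) (~` D)) ?add0e //.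
- exact: measurableD.
- exact: measurableC.
Qed.

Lemma measure_eq_conull A B : measurable A -> measurable B ->
  D `&` A = D `&` B -> m A = m B.
Proof.
move=> mA mB AB.
by rewrite -measure_setI_conull // setIC AB setIC measure_setI_conull.
Qed.

End conull.

Section affine.
Context {R : realType}.

Definition affine (a b x : R) : R := a * x + b.

Lemma measurable_affine a b : measurable_fun setT (affine a b).
Proof. by apply: measurable_funD => //; exact: measurable_funM. Qed.

Lemma measurable_affine_preimage a b (A : set R) :
  measurable A -> measurable (affine a b @^-1` A).
Proof. by move=> mA; rewrite -[_ @^-1` _]setTI; exact: measurable_affine. Qed.

Lemma lebesgue_measure_affine_preimage a b (A : set R) : 0 < a -> measurable A ->
  lebesgue_measure A = (a%:E * lebesgue_measure (affine a b @^-1` A))%E.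
Proof.
move=> a0 mA.
have maff : measurable_fun setT (affine a b : measurableTypeR R -> measurableTypeR R).
  exact: measurable_affine.
(* The pushforward is a measure only given [maff], so its instance is named. *)
pose image := measure_function_pushforward__canonical__measure_function_Measure
  (@lebesgue_measure R) maff.
have := @lebesgue_measure_unique R (mscale (NngNum (ltW a0)) image) _ A mA.
rewrite /mscale /= => -> // _ [[x y] _ <-].
rewrite /mscale /= /pushforward.
have -> : affine a b @^-1` `]x, y] = `](x - b) / a, (y - b) / a]%classic.
  by apply/seteqP; split => z; rewrite /= !in_itv /= /affine
    ltr_pdivrMr // ler_pdivlMr // ltrBlDr lerBrDr ![z * a]mulrC.
rewrite !lebesgue_measure_itv /= !lte_fin ltr_pM2r ?invr_gt0 // ltrD2r.
case: ifPn => _; last by rewrite mule0.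
by rewrite -EFinD -EFinM; congr EFin; field; rewrite gt_eqF.
Qed.

End affine.

Section S1_count.
Context {R : realType} (u : R).
Hypotheses (u0 : 0 < u) (u1 : u < 1).

Definition expand (x : R) : R := if x < u then x / u else (x - u) / (1 - u).

(* [S1_count n x] is the number of [S1] letters among the first [n] letters
   of the address of [x]: [expand] undoes [S1] on [[0, u[] and [S0] elsewhere. *)
Fixpoint S1_count (n : nat) (x : R) : nat :=
  if n is n'.+1 then
    if x < u then (S1_count n' (expand x)).+1 else S1_count n' (expand x)
  else 0.

Lemma measurable_expand : measurable_fun setT expand.
Proof.
apply: measurable_fun_ifT; first exact: measurable_fun_ltr.
  exact: measurable_funM.
by apply: measurable_funM => //; exact: measurable_funB.
Qed.

Lemma measurable_S1_count n : measurable_fun setT (S1_count n).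
Proof.
elim: n => [|n IH] //=.
have mE : measurable_fun setT (S1_count n \o expand).
  exact: measurableT_comp IH measurable_expand.
apply: measurable_fun_ifT => //; first exact: measurable_fun_ltr.
exact: measurableT_comp mE.
Qed.

Lemma measurable_S1_count_preimage n (P : set nat) :
  measurable (S1_count n @^-1` P).
Proof. by rewrite -[_ @^-1` _]setTI; exact: measurable_S1_count. Qed.

Lemma expand_S0 x : 0 <= x -> ~~ (S0 u x < u) /\ expand (S0 u x) = x.
Proof.
move=> x0; have S0x : ~~ (S0 u x < u).
  by rewrite /S0 -leNgt lerDl mulr_ge0 // subr_ge0 ltW.
split => //; rewrite /expand (negbTE S0x) /S0.
by field; rewrite subr_eq0 gt_eqF.
Qed.

Lemma expand_S1 x : x < 1 -> S1 u x < u /\ expand (S1 u x) = x.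
Proof.
move=> x1; have S1x : S1 u x < u by rewrite /S1 gtr_pMr.
by split => //; rewrite /expand S1x /S1; field; rewrite gt_eqF.
Qed.

Lemma S0_affine : S0 u = affine (1 - u) u.
Proof. by apply/funext => x; rewrite /S0 /affine addrC. Qed.

Lemma S1_affine : S1 u = affine u 0.
Proof. by apply/funext => x; rewrite /S1 /affine addr0. Qed.

Lemma measurable_S0_preimage A : measurable A -> measurable (S0 u @^-1` A).
Proof. by rewrite S0_affine; exact: measurable_affine_preimage. Qed.

Lemma measurable_S1_preimage A : measurable A -> measurable (S1 u @^-1` A).
Proof. by rewrite S1_affine; exact: measurable_affine_preimage. Qed.

Lemma S1_count_S0 n x : 0 <= x -> S1_count n.+1 (S0 u x) = S1_count n x.
Proof. by move=> /expand_S0[/negbTE /= -> ->]. Qed.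

Lemma S1_count_S1 n x : x < 1 -> S1_count n.+1 (S1 u x) = (S1_count n x).+1.
Proof. by move=> /expand_S1[/= -> ->]. Qed.

End S1_count.

Section S1_count_law.
Context {R : realType} {u q : R} {m : set R -> \bar R}.
Hypotheses (u0 : 0 < u) (u1 : u < 1) (m0 : m set0 = 0%E) (mT : m setT = 1%E).
Hypothesis m_eq : forall A B : set R, measurable A -> measurable B ->
  `[0, 1[ `&` A = `[0, 1[ `&` B -> m A = m B.
Hypothesis mS : forall A, measurable A ->
  m A = ((1 - q)%:E * m (S0 u @^-1` A) + q%:E * m (S1 u @^-1` A))%E.

Lemma S1_count_binomial n (P : pred nat) :
  m (S1_count u n @^-1` [set k | P k]) = (\sum_(k < n.+1 | P k) binomial_pmf n q k)%:E.
Proof.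
elim: n P => [|n IH] P.
  rewrite big_mkcond big_ord1 /binomial_pmf bin0 !expr0 mulr1 /=.
  case: ifPn => P0.
    by rewrite (_ : _ @^-1` _ = setT) ?mT //; apply/seteqP; split.
  rewrite (_ : _ @^-1` _ = set0) ?m0 //.
  by apply/seteqP; split => x //=; rewrite (negbTE P0).
have mC k := @measurable_S1_count_preimage R u k.
rewrite mS ?mC //.
have -> : m (S0 u @^-1` (S1_count u n.+1 @^-1` [set k | P k]))
        = m (S1_count u n @^-1` [set k | P k]).
  apply: m_eq; [exact: measurable_S0_preimage (mC _ _) | exact: mC |].
  apply: (@eq_preimage _ _ _ _ (S1_count u n.+1 \o S0 u)) => x.
  by rewrite inE /= in_itv /= => /andP[x0 _]; exact: S1_count_S0.
have -> : m (S1 u @^-1` (S1_count u n.+1 @^-1` [set k | P k]))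
        = m (S1_count u n @^-1` [set k | P k.+1]).
  apply: m_eq; [exact: measurable_S1_preimage (mC _ _) | exact: mC |].
  apply: (@eq_preimage _ _ _ _ (S1_count u n.+1 \o S1 u) (succn \o S1_count u n)).
  by move=> x; rewrite inE /= in_itv /= => /andP[_ x1]; exact: S1_count_S1.
by rewrite !IH -!EFinM -EFinD sum_binomial_pmfS.
Qed.

End S1_count_law.

Section lebesgue_unit_interval.
Context {R : realType} {u : R}.
Hypotheses (u0 : 0 < u) (u1 : u < 1).

Lemma S1_preimage_itv : S1 u @^-1` `[0, u[ = `[0, 1[%classic.
Proof.
by apply/seteqP; split => x; rewrite /= !in_itv /= /S1 pmulr_rge0 // gtr_pMr.
Qed.

Lemma S0_preimage_itv : S0 u @^-1` `[u, 1[ = `[0, 1[%classic.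
Proof.
have u1' : 0 < 1 - u by rewrite subr_gt0.
apply/seteqP; split => x; rewrite /= !in_itv /= /S0.
  by rewrite lerDl pmulr_rge0 // -ltrBrDl gtr_pMr.
by rewrite lerDl pmulr_rge0 // -ltrBrDl gtr_pMr.
Qed.

Lemma lebesgue_itv01_self_similar (A : set R) : measurable A ->
  lebesgue_measure (A `&` `[0, 1[) =
  ((1 - u)%:E * lebesgue_measure (S0 u @^-1` A `&` `[0%R, 1%R[)
   + u%:E * lebesgue_measure (S1 u @^-1` A `&` `[0%R, 1%R[))%E.
Proof.
move=> mA.
have -> : A `&` `[0, 1[ = (A `&` `[0, u[) `|` (A `&` `[u, 1[).
  rewrite -setIUr; congr (_ `&` _); apply/seteqP; split => x /=; rewrite !in_itv /=.
    by case: (ltP x u) => xu /andP[x0 x1]; [left|right]; rewrite ?x0 ?x1 ?xu.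
  case=> /andP[x0 x1]; apply/andP; split => //.
    exact: lt_trans x1 u1.
  exact: le_trans (ltW u0) x0.
have mA0u : measurable (A `&` `[0, u[) by exact: measurableI.
have mAu1 : measurable (A `&` `[u, 1[) by exact: measurableI.
transitivity (lebesgue_measure (A `&` `[0%R, u[) + lebesgue_measure (A `&` `[u, 1%R[))%E.
  apply: measureU => //; apply/seteqP; split => x //= [[_]].
  rewrite !in_itv /= => /andP[_ xu] [_ /andP[ux _]].
  by move: (lt_le_trans xu ux); rewrite ltxx.
rewrite addeC (lebesgue_measure_affine_preimage _ 0 _ u0 mA0u).
rewrite (lebesgue_measure_affine_preimage (1 - u) u _ _ mAu1) ?subr_gt0 //.
by rewrite -S0_affine -S1_affine !preimage_setI S0_preimage_itv S1_preimage_itv.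
Qed.

End lebesgue_unit_interval.

Lemma self_similar_measure_itv01_conull {R : realType} {p u : R} {mu : probability R R} :
  0 < p -> 0 < u -> u < 1 -> self_similar_measure p u mu -> mu (~` `[0, 1[) = 0%E.
Proof.
move=> p0 u0 u1 [mu01 mS].
have muC01 : mu (~` `[0, 1]) = 0%E.
  by rewrite probability_setC // set_itvcc mu01 subee.
have muS1 : mu (S1 u @^-1` [set 1]) = 0%E.
  have mS1 : measurable (S1 u @^-1` [set 1]) by exact: measurable_S1_preimage.
  apply: (subset_measure0 mS1 _ _ muC01); first exact: measurableC.
  move=> x /=; rewrite /S1 => ux1.
  have -> : x = u^-1 by rewrite -[x](mulKf (lt0r_neq0 u0)) ux1 mulr1.
  by apply/negP; rewrite in_itv /= [u^-1 <= 1]leNgt invf_gt1 ?u1 ?andbF.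
have mu1 : mu [set 1] = 0%E.
  have := mS _ (measurable_set1 1); rewrite muS1 mule0 adde0.
  have -> : S0 u @^-1` [set 1] = [set 1].
    apply/seteqP; split => x /=; rewrite /S0; last by move=> ->; rewrite mulr1 subrKC.
    have u1n0 : 1 - u != 0 by rewrite subr_eq0 gt_eqF.
    by move=> e; apply: (mulfI u1n0); rewrite mulr1; lra.
  have fin1 : mu [set 1] \is a fin_num by rewrite fin_num_measure.
  rewrite -(fineK fin1) -EFinM; set z := fine _ => zE.
  have e : z = (1 - p) * z by apply: EFin_inj.
  have : p * z = 0 by lra.
  by move/eqP; rewrite mulf_eq0 gt_eqF //= => /eqP ->.
rewrite -(setDitv1r _ 1 false) setCD.
apply: null_set_setU => //; exact: measurableC.
Qed.

Section separating_sets.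
Context {R : realType} (p u : R).
Hypotheses (p0 : 0 < p) (p1 : p < 1) (u0 : 0 < u) (u1 : u < 1).

Let p01 : 0 <= p <= 1. Proof. by rewrite !ltW. Qed.
Let u01 : 0 <= u <= 1. Proof. by rewrite !ltW. Qed.

Definition separating_set n : set R :=
  `[0, 1[ `&` S1_count u n @^-1` [set k | binomial_pmf n u k < binomial_pmf n p k].

Lemma measurable_separating_set n : measurable (separating_set n).
Proof. by apply: measurableI => //; exact: measurable_S1_count_preimage. Qed.

Lemma lebesgue_separating_set_le n :
  (lebesgue_measure (separating_set n) <= (hellinger_affinity p u ^+ n)%:E)%E.
Proof.
pose leb01 (A : set R) := lebesgue_measure (A `&` `[0%R, 1%R[).
have leb01_0 : leb01 set0 = 0%E by rewrite /leb01 set0I measure0.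
have leb01T : leb01 setT = 1%E.
  by rewrite /leb01 setTI lebesgue_measure_itv /= lte01 sube0.
have leb01_eq (A B : set R) : measurable A -> measurable B ->
    `[0, 1[ `&` A = `[0, 1[ `&` B -> leb01 A = leb01 B.
  by move=> _ _ AB; rewrite /leb01 !(setIC _ `[0%R, 1%R[%classic) AB.
have law := S1_count_binomial u0 u1 leb01_0 leb01T leb01_eq
  (lebesgue_itv01_self_similar u0 u1) n.
rewrite /separating_set setIC -[lebesgue_measure _]/(leb01 _).
set P := fun k => binomial_pmf n u k < binomial_pmf n p k.
rewrite (law P) lee_fin hellinger_affinityC.
by apply: (@sum_binomial_pmf_le_affinity _ _ _ _ P) => // k /ltW.
Qed.

Lemma self_similar_measure_separating_setC_le (mu : probability R R) n :
  self_similar_measure p u mu ->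
  (mu (~` separating_set n) <= (hellinger_affinity p u ^+ n)%:E)%E.
Proof.
move=> muS; have [_ mS] := muS.
have mu01 := self_similar_measure_itv01_conull p0 u0 u1 muS.
have law := S1_count_binomial u0 u1 (measure0 mu) (probability_setT mu)
  (measure_eq_conull (measurable_itv _) mu01) mS.
set P := fun k => ~~ (binomial_pmf n u k < binomial_pmf n p k).
rewrite (measure_eq_conull _ mu01 _ (S1_count u n @^-1` [set k | P k])).
- rewrite law lee_fin; apply: (@sum_binomial_pmf_le_affinity _ _ _ _ P) => // k.
  by rewrite /P leNgt.
- exact: measurable_itv.
- exact: measurableC (measurable_separating_set n).
- exact: measurable_S1_count_preimage.
- apply/seteqP; split => x [x01 Bx]; split => //=.
    by apply/negP => ux; apply: Bx.
  by move=> [_ /= ux]; move: Bx; rewrite /= /P ux.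
Qed.

End separating_sets.

Theorem proposition5 (R : realType) (p u : R)
  (hp0 : 0 < p) (hp1 : p < 1) (hu0 : 0 < u) (hu1 : u < 1) (hup : u != p)
  (mu : probability R R) :
  self_similar_measure p u mu -> singular_wrt_lebesgue mu.
Proof.
move=> muS; set B := separating_set p u.
have mB n : measurable (B n) by exact: measurable_separating_set.
have rho01 : 0 <= hellinger_affinity p u < 1.
  by rewrite hellinger_affinity_ge0 hellinger_affinity_lt1 1?eq_sym ?ltW.
exists (lim_sup_set B); split.
- exact: measurable_lim_sup_set.
- apply: lim_sup_set_cvg0 => //.
  apply: (@nneseries_lty_geometric _ _ (fun n => lebesgue_measure (B n)) rho01) => n.
  by rewrite measure_ge0 lebesgue_separating_set_le.
- apply: lim_sup_set_conull => //.
  apply: (@nneseries_lty_geometric _ _ (fun n => mu (~` B n)) rho01) => n.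
  by rewrite measure_ge0 self_similar_measure_separating_setC_le.
Qed.
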